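(* Let $G$ be connected with weights $w:E\to\mathbb{R}_{>0}$, let $\pi$ be a vertex order and let $m_P$ be the perfect metric on $G_\pi^*$. Let $R$ be the set of edges $\{x,y\}$ of $G_\pi^*$, where $x$ denotes the lower-ranked endpoint, for which there exists a vertex $z\neq y$ of rank larger than the rank of $x$, adjacent to both $x$ and $y$ in $G_\pi^*$, with $m_P(\{x,y\})=m_P(\{x,z\})+m_P(\{z,y\})$. Then (i) for all $s,t\in V$ there is an up-down $s$–$t$ path in $G_\pi^*$ that uses no edge of $R$ and whose $m_P$-length equals $\mathrm{dist}_I(s,t)$; and (ii) for every edge $\{x,y\}\notin R$ of $G_\pi^*$, the one-edge path $x,y$ is the only up-down $x$–$y$ path in $G_\pi^*$ whose $m_P$-length equals $\mathrm{dist}_I(x,y)$.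
   Context: Let $G=(V,E)$ be a finite simple undirected graph with $n=|V|$ vertices. A vertex order is a bijection $\pi:\{1,\dots,n\}\to V$; the rank of $v$ is $\pi^{-1}(v)$. Contracting a vertex $v$ in a graph means deleting $v$ and its incident edges and adding an edge between every pair of former neighbors of $v$ that are not already adjacent. The core graph $G_{\pi,i}$ is obtained from $G$ by contracting $\pi(1),\dots,\pi(i-1)$ in this order. $G_\pi^*$ is the graph on $V$ whose edge set is the union of the edge sets of all $G_{\pi,i}$, $i=1,\dots,n$ (i.e. $G$ together with all edges inserted during the contractions). Let $w:E\to\mathbb{R}_{>0}$ and let $\mathrm{dist}_I(s,t)$ be the shortest $s$–$t$ path length in $(G,w)$. A metric is a map $m$ assigning to every edge of $G_\pi^*$ a value in $\mathbb{R}_{>0}\cup\{\infty\}$; the $m$-length of a path in $G_\pi^*$ is the sum of $m$ over its edges. An up-down path is a path $v_0,\dots,v_k$ in $G_\pi^*$ for which there is $j$ with the ranks strictly increasing along $v_0,\dots,v_j$ and strictly decreasing along $v_j,\dots,v_k$. The perfect metric is $m_P(\{x,y\})=\mathrm{dist}_I(x,y)$ for every edge $\{x,y\}$ of $G_\pi^*$. *)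

From HB Require Import structures.
From mathcomp Require Import all_boot all_order all_algebra.
Set Implicit Arguments. Unset Strict Implicit. Unset Printing Implicit Defensive.
Import Order.TTheory GRing.Theory Num.Theory.
Local Open Scope ring_scope.

Section Defs.
Variable T : finType.

Definition walk_len (R : numDomainType) (len : T -> T -> R) (s : T) (p : seq T) : R :=
  \sum_(xy <- zip (s :: p) p) len xy.1 xy.2.

Definition is_walk (e : rel T) (s t : T) (p : seq T) : bool :=
  path e s p && (last s p == t).

Fixpoint all_seqs (k : nat) : seq (seq T) :=
  if k is k'.+1 then [seq x :: q | x <- enum T, q <- all_seqs k'] else [:: [::]].

(* minimum of a list (0 for the empty list) *)
Definition min_list (R : realDomainType) (l : seq R) : R :=
  if l is x :: l' then foldr Num.min x l' else 0.

(* Shortest-path distance dist_I(s,t) in (G,w): the minimum length of an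
   s-t walk with fewer than #|T| edges (a shortest path is simple, hence
   among these walks; longer walks are never shorter since w > 0). *)
Definition dist_I (R : realDomainType) (e : rel T) (w : T -> T -> R) (s t : T) : R :=
  min_list [seq walk_len w s p |
             p <- [seq q <- flatten [seq all_seqs k | k <- iota 0 #|T|]
                  | is_walk e s t q]].

(* Core graphs: core_edge e rank i = edge relation of G_{pi,i+1}, i.e. G
   after contracting the vertices of rank 0, ..., i-1 (ranks 0-based). *)
Fixpoint core_edge (e : rel T) (rank : T -> 'I_#|T|) (i : nat) : rel T :=
  if i is i'.+1 then
    fun x y =>
      [&& (rank x != i' :> nat), (rank y != i' :> nat) &
        core_edge e rank i' x y ||
        [exists v, [&& (rank v == i' :> nat), core_edge e rank i' x v,
                       core_edge e rank i' v y & x != y]]]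
  else e.

Definition gstar (e : rel T) (rank : T -> 'I_#|T|) : rel T :=
  fun x y => [exists i : 'I_#|T|, core_edge e rank i x y].

Definition up_down (rank : T -> 'I_#|T|) (s : T) (p : seq T) : Prop :=
  exists j : nat,
    sorted ltn (take j.+1 (map (fun v => nat_of_ord (rank v)) (s :: p))) /\
    sorted (fun a b => b < a)%N (drop j (map (fun v => nat_of_ord (rank v)) (s :: p))).

Definition perfect_metric (R : realDomainType) (e : rel T) (w : T -> T -> R)
  (x y : T) : R := dist_I e w x y.

Definition R_cond (R : realDomainType) (e : rel T) (w : T -> T -> R)
  (rank : T -> 'I_#|T|) (x y : T) : Prop :=
  exists z : T, [/\ z != y, (rank x < rank z)%N, gstar e rank x z, gstar e rank z y &
    perfect_metric e w x y = perfect_metric e w x z + perfect_metric e w z y].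

Definition in_R (R : realDomainType) (e : rel T) (w : T -> T -> R)
  (rank : T -> 'I_#|T|) (x y : T) : Prop :=
  gstar e rank x y /\
  (((rank x < rank y)%N /\ R_cond e w rank x y) \/
   ((rank y < rank x)%N /\ R_cond e w rank y x)).

Definition avoids_R (R : realDomainType) (e : rel T) (w : T -> T -> R)
  (rank : T -> 'I_#|T|) (s : T) (p : seq T) : Prop :=
  forall xy, xy \in zip (s :: p) p -> ~ in_R e w rank xy.1 xy.2.

End Defs.

(* The perfect metric m_P is a metric, and by the construction of G_pi^* the
   neighbours of a vertex x of rank larger than x form a clique.  A shortest
   path of G is an m_P-geodesic walk of G_pi^*.  A valley a > b < c of a
   geodesic walk can be cut short through the clique at b without making the
   walk longer, and this lowers the mass sum_v 2^rank(v); so a geodesic of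
   minimal mass is up-down.  An edge {x,y} of R on an up-down geodesic can be
   replaced by x,z,y; when z lies above y, the ascent following y is skipped
   through the clique at y.  The result is again an up-down geodesic, of larger
   mass, and since geodesics are simple the mass is bounded: an up-down
   geodesic of maximal mass avoids R.  Finally, if an up-down geodesic from x
   to y with {x,y} an edge has a second vertex v other than y, then v lies
   above x, hence is adjacent to y, and witnesses that {x,y} is in R. *)

From HB Require Import structures.
From mathcomp Require Import all_boot all_order all_algebra.
From mathcomp Require Import zify lra.
From Stdlib Require Import Classical.
Set Implicit Arguments. Unset Strict Implicit. Unset Printing Implicit Defensive.
Import Order.TTheory GRing.Theory Num.Theory.
Local Open Scope ring_scope.

Section WalkLength.
Variables (T : finType) (R : numDomainType).
Implicit Types (len : T -> T -> R) (r : rel T) (s v : T) (p : seq T).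

Lemma walk_len_nil len s : walk_len len s [::] = 0.
Proof. by rewrite /walk_len big_nil. Qed.

Lemma walk_len_cons len s v p : walk_len len s (v :: p) = len s v + walk_len len v p.
Proof. by rewrite /walk_len /= big_cons. Qed.

Lemma walk_len_cat len s p1 p2 :
  walk_len len s (p1 ++ p2) = walk_len len s p1 + walk_len len (last s p1) p2.
Proof.
elim: p1 s => [|v p1 IH] s /=; first by rewrite walk_len_nil add0r.
by rewrite !walk_len_cons IH addrA.
Qed.

Lemma last_rev_belast s p : last (last s p) (rev (belast s p)) = s.
Proof. by elim: p s => [|v p IH] s //=; rewrite rev_cons last_rcons. Qed.

Lemma walk_len_rev len s p :
  walk_len len (last s p) (rev (belast s p)) = walk_len (fun a b => len b a) s p.
Proof.
elim: p s => [|v p IH] s /=; first by rewrite !walk_len_nil.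
rewrite rev_cons -cats1 walk_len_cat IH last_rev_belast.
by rewrite !walk_len_cons walk_len_nil addr0 addrC.
Qed.

Lemma ler_walk_len r len1 len2 s p : path r s p ->
  (forall a b, r a b -> len1 a b <= len2 a b) -> walk_len len1 s p <= walk_len len2 s p.
Proof.
move=> + le12; elim: p s => [|v p IH] s /=; first by rewrite !walk_len_nil.
by case/andP=> rsv rp; rewrite !walk_len_cons lerD ?le12 ?IH.
Qed.

Lemma eq_walk_len r len1 len2 s p : path r s p ->
  (forall a b, r a b -> len1 a b = len2 a b) -> walk_len len1 s p = walk_len len2 s p.
Proof.
move=> rp eq12; apply/le_anti.
by rewrite !(ler_walk_len rp) // => a b /eq12 ->.
Qed.

Lemma walk_len_ge0 r len s p : path r s p ->
  (forall a b, r a b -> 0 <= len a b) -> 0 <= walk_len len s p.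
Proof.
move=> + len_ge0; elim: p s => [|v p IH] s /=; first by rewrite walk_len_nil.
by case/andP=> rsv rp; rewrite walk_len_cons addr_ge0 ?len_ge0 ?IH.
Qed.

End WalkLength.

Section MinList.
Variable R : realDomainType.

Lemma min_list_le (l : seq R) x : x \in l -> min_list l <= x.
Proof.
case: l => [//|a l] /=; elim: l => [|b l IH] /=; first by rewrite inE => /eqP->.
rewrite ge_min !inE => /or3P[xa|/eqP->|xl].
- by rewrite IH ?orbT // inE xa.
- by rewrite lexx.
- by rewrite IH ?orbT // inE xl orbT.
Qed.

Lemma min_list_mem (l : seq R) : l != [::] -> min_list l \in l.
Proof.
case: l => [//|a l] _ /=; elim: l => [|b l IH] /=; first by rewrite inE.
case: leP => _; first by rewrite !inE eqxx orbT.
by move: IH; rewrite !inE => /orP[->|->]; rewrite ?orbT.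
Qed.

End MinList.

Lemma mem_all_seqs (T : finType) (q : seq T) : q \in all_seqs T (size q).
Proof.
elim: q => [|x q IH] //=.
by apply: (allpairs_f_dep (fun x q => x :: q)); rewrite ?mem_enum.
Qed.

Section ShortestPaths.
Variables (T : finType) (R : realFieldType) (e : rel T) (w : T -> T -> R).
Hypothesis e_sym : symmetric e.
Hypothesis e_conn : forall s t : T, connect e s t.
Hypothesis w_sym : forall x y, e x y -> w x y = w y x.
Hypothesis w_pos : forall x y, e x y -> 0 < w x y.

Local Notation d := (dist_I e w).

Let w_walk_ge0 s p : path e s p -> 0 <= walk_len w s p.
Proof. by move=> ep; apply: (walk_len_ge0 ep) => a b /w_pos/ltW. Qed.

Lemma exists_uniq_walk_le s p : path e s p -> exists q,
  [/\ path e s q, last s q = last s p, uniq (s :: q) & walk_len w s q <= walk_len w s p].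
Proof.
elim: p s => [|v p IH] s; first by exists [::].
case/andP=> esv ep; have [q [pq lq uq le_qp]] := IH _ ep.
have : [/\ path e s (v :: q), last s (v :: q) = last s (v :: p), uniq (v :: q) &
    walk_len w s (v :: q) <= walk_len w s (v :: p)].
  by split; rewrite /= ?esv ?lq // !walk_len_cons lerD2l.
move: (v :: q) => {}q [{}pq {}lq {}uq {}le_qp].
have [s_q | s_q] := boolP (s \in q); last by exists q; rewrite /= s_q.
move: pq lq uq le_qp; case/splitPr: s_q => q1 q2.
rewrite cat_path cat_uniq last_cat walk_len_cat /=.
case/andP=> pq1 /andP[es pq2] lq /and3P[_ _ /andP[s_q2 uq2]] le_qp.
exists q2; split; rewrite /= ?s_q2 //; apply: le_trans le_qp.
by rewrite walk_len_cons addrA lerDr addr_ge0 ?w_walk_ge0 ?ltW ?w_pos.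
Qed.

Lemma mem_dist_candidates s q : path e s q -> (size q < #|T|)%N ->
  walk_len w s q \in [seq walk_len w s p |
    p <- [seq r <- flatten [seq all_seqs T k | k <- iota 0 #|T|] | is_walk e s (last s q) r]].
Proof.
move=> pq lt_q; apply: map_f; rewrite mem_filter /is_walk pq eqxx /=.
apply/flattenP; exists (all_seqs T (size q)); last exact: mem_all_seqs.
by apply: map_f; rewrite mem_iota.
Qed.

Let uniq_size_lt_card (s : T) q : uniq (s :: q) -> (size q < #|T|)%N.
Proof. by move/card_uniqP => /= <-; apply: max_card. Qed.

Lemma dist_I_le_walk s p : path e s p -> d s (last s p) <= walk_len w s p.
Proof.
move=> ep; have [q [pq <- uq le_qp]] := exists_uniq_walk_le ep.
apply: le_trans le_qp; apply: min_list_le.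
exact: mem_dist_candidates pq (uniq_size_lt_card uq).
Qed.

Lemma dist_I_attained s t :
  exists q, [/\ path e s q, last s q = t & walk_len w s q = d s t].
Proof.
rewrite /dist_I; set l := (X in min_list X).
have /min_list_mem : l != [::].
  have /connectP[p ep tp] := e_conn s t.
  have [q [pq lq uq _]] := exists_uniq_walk_le ep.
  have := mem_dist_candidates pq (uniq_size_lt_card uq).
  by rewrite lq -tp -/l; case: l.
case/mapP=> q; rewrite mem_filter => /andP[/andP[pq /eqP lq] _] ->.
by exists q.
Qed.

Lemma dist_I_ge0 s t : 0 <= d s t.
Proof. by have [q [pq _ <-]] := dist_I_attained s t; apply: w_walk_ge0. Qed.

Lemma dist_I_xx s : d s s = 0.
Proof.
apply/le_anti; rewrite dist_I_ge0 andbT.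
by have := @dist_I_le_walk s [::] isT; rewrite walk_len_nil.
Qed.

Lemma dist_I_gt0 s t : s != t -> 0 < d s t.
Proof.
move=> st; have [[|v q] [/= pq lq <-]] := dist_I_attained s t.
  by rewrite lq eqxx in st.
by case/andP: pq => esv pq; rewrite walk_len_cons ltr_pwDl ?w_pos ?w_walk_ge0.
Qed.

Lemma dist_I_sym s t : d s t = d t s.
Proof.
wlog suff: s t / d t s <= d s t by move=> le; apply/le_anti; rewrite !le.
have [q [pq lq <-]] := dist_I_attained s t.
have eq_rev : path e (last s q) (rev (belast s q)).
  by rewrite rev_path; apply: sub_path pq => a b; rewrite e_sym.
have := dist_I_le_walk eq_rev; rewrite last_rev_belast walk_len_rev lq.
by rewrite (eq_walk_len (len2 := w) pq) // => a b /w_sym.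
Qed.

Lemma dist_I_triangle a b c : d a c <= d a b + d b c.
Proof.
have [q1 [pq1 l1 <-]] := dist_I_attained a b.
have [q2 [pq2 l2 <-]] := dist_I_attained b c.
have := @dist_I_le_walk a (q1 ++ q2).
by rewrite cat_path pq1 l1 pq2 last_cat l1 l2 walk_len_cat l1; apply.
Qed.

Lemma dist_I_le_weight a b : e a b -> d a b <= w a b.
Proof.
move=> eab; have := @dist_I_le_walk a [:: b].
by rewrite /= eab walk_len_cons walk_len_nil addr0; apply.
Qed.

End ShortestPaths.

Section CoreGraphs.
Variables (T : finType) (e : rel T) (rank : T -> 'I_#|T|).
Hypothesis e_sym : symmetric e.
Hypothesis e_irr : irreflexive e.

Local Notation ce := (core_edge e rank).
Local Notation g := (gstar e rank).

Lemma core_edge_sym i : symmetric (ce i).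
Proof.
suff ce_sym x y : ce i x y -> ce i y x by move=> x y; apply/idP/idP; apply: ce_sym.
elim: i x y => [|i IH] x y /=; first by rewrite e_sym.
case/and3P=> rx ry /orP[h|/existsP[v /and4P[rv h1 h2 xy]]]; rewrite rx ry /=.
  by rewrite (IH _ _ h).
by apply/orP; right; apply/existsP; exists v; rewrite rv (IH _ _ h1) (IH _ _ h2) eq_sym.
Qed.

Lemma core_edge_irr i : irreflexive (ce i).
Proof.
elim: i => [|i IH] x /=; first exact: e_irr.
by rewrite IH; apply/negP => /and3P[_ _ /existsP[v /and4P[_ _ _]]]; rewrite eqxx.
Qed.

Lemma core_edge_rank i x y : ce i x y -> (i <= rank x)%N.
Proof.
elim: i x y => [//|i IH] x y /= /and3P[rx _ /orP[h|/existsP[v /and3P[_ h _]]]];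
  by rewrite ltn_neqAle eq_sym rx (IH _ _ h).
Qed.

Lemma core_edge_lift i j x y : ce i x y -> (i <= j)%N ->
  (j <= rank x)%N -> (j <= rank y)%N -> ce j x y.
Proof.
move=> cexy /subnKC <-; elim: (j - i)%N => [|k IH]; first by rewrite addn0.
rewrite addnS => ltx lty /=.
by rewrite !neq_ltn ltx lty !orbT IH ?(ltnW ltx) ?(ltnW lty).
Qed.

Lemma gstar_sym : symmetric g.
Proof. by move=> x y; apply/existsP/existsP => -[i]; exists i; rewrite core_edge_sym. Qed.

Lemma gstar_irr : irreflexive g.
Proof. by move=> x; apply/existsPn => i; rewrite core_edge_irr. Qed.

Lemma sub_gstar x y : e x y -> g x y.
Proof.
by move=> exy; apply/existsP; exists (Ordinal (leq_ltn_trans (leq0n _) (ltn_ord (rank x)))).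
Qed.

(* Both edges x-a and x-b survive up to the contraction of x, which joins a and b. *)
Lemma gstar_upper_clique x a b : g x a -> g x b ->
  (rank x < rank a)%N -> (rank x < rank b)%N -> a != b -> g a b.
Proof.
have at_rank y : g x y -> (rank x < rank y)%N -> ce (rank x) x y.
  case/existsP=> i cexy lt.
  exact: core_edge_lift cexy (core_edge_rank cexy) _ (ltnW lt).
move=> gxa gxb lta ltb ab; apply/existsP.
exists (Ordinal (leq_ltn_trans lta (ltn_ord (rank a)))); apply/and3P; split.
- by rewrite neq_ltn lta orbT.
- by rewrite neq_ltn ltb orbT.
apply/orP; right; apply/existsP; exists x.
apply/and4P; split => //; last exact: at_rank.
by have := at_rank _ gxa lta; rewrite core_edge_sym.
Qed.

End CoreGraphs.

Section Unimodal.
Variables (T : Type) (rk : T -> nat).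

Definition rk_lt x y := (rk x < rk y)%N.
Definition rk_gt x y := (rk y < rk x)%N.

Fixpoint unimodal (L : seq T) : bool :=
  if L is a :: L' then
    if L' is b :: _ then (if (rk a < rk b)%N then unimodal L' else path rk_gt a L')
    else true
  else true.

Lemma unimodalP L :
  (exists j, sorted rk_lt (take j.+1 L) /\ sorted rk_gt (drop j L)) <-> unimodal L.
Proof.
elim: L => [|a [|b L] IH]; try by split => // _; exists 0.
rewrite /=; case: ltnP => hab; split.
- case=> [[|j] [/= up down]]; last by apply/IH; exists j; case/andP: up.
  by move: down => /andP[]; rewrite /rk_gt ltnNge ltnW.
- by case/IH=> j [up down]; exists j.+1; rewrite /= {1}/rk_lt hab.
- case=> [[|j] [/= up down]] //.
  by move: up => /andP[]; rewrite /rk_lt ltnNge hab.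
- by move=> down; exists 0.
Qed.

Lemma unimodal_rev L : unimodal L -> unimodal (rev L).
Proof.
case/unimodalP=> j [up down]; apply/unimodalP.
have [ltjL | leLj] := ltnP j (size L).
  exists (size L - j.+1)%N; rewrite take_rev drop_rev.
  have -> : (size L - (size L - j.+1).+1 = j)%N by lia.
  have -> : (size L - (size L - j.+1) = j.+1)%N by lia.
  by rewrite !rev_sorted.
exists 0; split; first by case: (rev L) => //= a ?; rewrite take0.
by rewrite drop0 rev_sorted; move: up; rewrite take_oversize // leqW.
Qed.

Lemma unimodal_cat_ascent L1 a b L2 : (rk a < rk b)%N ->
  unimodal (L1 ++ a :: b :: L2) = sorted rk_lt (rcons L1 a) && unimodal (b :: L2).
Proof.
move=> ab; have no_descent c L : path rk_gt c (L ++ a :: b :: L2) = false.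
  by rewrite cat_path /= {3}/rk_gt ltnNge ltnW ?andbF.
have unimodal_cons2 c d L : unimodal [:: c, d & L] =
  if (rk c < rk d)%N then unimodal (d :: L) else path rk_gt c (d :: L) by [].
elim: L1 => [|c L1 IH]; first by rewrite cat0s unimodal_cons2 ab.
case: L1 IH => [|c' L1] IH.
- rewrite cat0s in IH; rewrite [_ ++ _]/= unimodal_cons2 IH.
  have := no_descent c [::]; rewrite cat0s => ->.
  by rewrite /= -/(rk_lt c a); case: rk_lt.
- rewrite [_ ++ _]/= unimodal_cons2 -cat_cons IH (no_descent c (c' :: L1)).
  by rewrite /= -/(rk_lt c c'); case: rk_lt.
Qed.

Lemma descent_valley a b M : (rk b < rk a)%N ->
  sorted (fun x y => rk x != rk y) (b :: M) -> ~~ path rk_gt b M ->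
  exists L1 x y z L2,
    [/\ a :: b :: M = L1 ++ x :: y :: z :: L2, (rk y < rk x)%N & (rk y < rk z)%N].
Proof.
elim: M a b => [|c M IH] a b //= ba /andP[bc sM].
rewrite {1}/rk_gt; case: ltnP => [cb /= /(IH b c cb sM)[L1 [x [y [z [L2 [-> *]]]]]]|bc' _].
  by exists (a :: L1), x, y, z, L2.
by exists [::], a, b, c, M; split => //; rewrite ltn_neqAle bc bc'.
Qed.

Lemma not_unimodal_valley L : sorted (fun x y => rk x != rk y) L -> ~~ unimodal L ->
  exists L1 x y z L2, [/\ L = L1 ++ x :: y :: z :: L2, (rk y < rk x)%N & (rk y < rk z)%N].
Proof.
elim: L => [|a [|b L] IH] //= /andP[ab sL]; case: ltnP => [lt_ab | le_ba].
  by case/(IH sL)=> [L1 [x [y [z [L2 [-> *]]]]]]; exists (a :: L1), x, y, z, L2.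
have ba : (rk b < rk a)%N by rewrite ltn_neqAle eq_sym ab.
by rewrite negb_and {1}/rk_gt ba /=; apply: descent_valley.
Qed.

Lemma path_rk_gt_last a L : path rk_gt a L -> (rk (last a L) <= rk a)%N.
Proof.
elim: L a => [|b L IH] a //= /andP[ba /IH]; rewrite /rk_gt in ba.
by move/leq_trans; apply; apply: ltnW.
Qed.

End Unimodal.

Lemma nat_descent (X : Type) (P Q : X -> Prop) (m : X -> nat) :
  (forall x, P x -> ~ Q x -> exists2 y, P y & (m y < m x)%N) ->
  forall x, P x -> exists2 y, P y & Q y.
Proof.
move=> step; suff descent n x : m x = n -> P x -> exists2 y, P y & Q y.
  by move=> x; apply: descent.
elim/ltn_ind: n x => n IH x mx Px.
have [Qx | nQx] := classic (Q x); first by exists x.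
have [y Py lt_yx] := step x Px nQx.
by apply: (IH (m y) _ y erefl Py); rewrite -mx.
Qed.

Lemma ohead_cat_cons (X : Type) (L1 M M' : seq X) x :
  ohead (L1 ++ x :: M) = ohead (L1 ++ x :: M').
Proof. by case: L1. Qed.

Lemma split_consecutive (X : eqType) (x y : X) L :
  (x, y) \in zip L (behead L) -> exists L1 L2, L = L1 ++ x :: y :: L2.
Proof.
elim: L => [|a [|b L] IH] //=; rewrite in_cons => /orP[/eqP[-> ->]|].
  by exists [::], L.
by case/IH=> L1 [L2 ->]; exists (a :: L1), L2.
Qed.

Section Geodesics.
Variables (R : realFieldType) (T : finType) (d : T -> T -> R) (g : rel T) (rk : T -> nat).
Hypothesis d_sym : forall x y, d x y = d y x.
Hypothesis d_xx : forall x, d x x = 0.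
Hypothesis d_gt0 : forall x y, x != y -> 0 < d x y.
Hypothesis d_triangle : forall x y z, d x z <= d x y + d y z.
Hypothesis g_sym : symmetric g.
Hypothesis g_irr : irreflexive g.
Hypothesis rk_inj : injective rk.
Hypothesis g_upper_clique : forall x a b, g x a -> g x b ->
  (rk x < rk a)%N -> (rk x < rk b)%N -> a != b -> g a b.

Definition seq_len (L : seq T) : R := if L is x :: p then walk_len d x p else 0.

Definition geodesic (s t : T) (L : seq T) : Prop :=
  [/\ ohead L = Some s, last s L = t, sorted g L & seq_len L = d s t].

Definition bypassable (x y : T) : Prop :=
  exists z, [/\ z != y, (rk x < rk z)%N, g x z, g z y & d x y = d x z + d z y].

(* [redundant x y] says that the edge {x,y} lies in the paper's set R. *)
Definition redundant (x y : T) : Prop :=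
  ((rk x < rk y)%N /\ bypassable x y) \/ ((rk y < rk x)%N /\ bypassable y x).

Definition rank_mass (L : seq T) : nat := \sum_(v <- L) 2 ^ rk v.

Let d_ge0 x y : 0 <= d x y.
Proof. by case: (eqVneq x y) => [->|/d_gt0/ltW //]; rewrite d_xx. Qed.

Lemma seq_len_cons2 x y L : seq_len [:: x, y & L] = d x y + seq_len (y :: L).
Proof. exact: walk_len_cons. Qed.

Lemma seq_len_cat L1 x M : seq_len (L1 ++ x :: M) = seq_len (rcons L1 x) + seq_len (x :: M).
Proof.
case: L1 => [|a L1] /=; first by rewrite walk_len_nil add0r.
by rewrite -cats1 !walk_len_cat !walk_len_cons walk_len_nil addr0 addrA.
Qed.

Lemma seq_len_ge0 L : 0 <= seq_len L.
Proof.
case: L => // x p /=; elim: p x => [|y p IH] x; first by rewrite walk_len_nil.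
by rewrite walk_len_cons addr_ge0.
Qed.

Lemma seq_len_rev L : seq_len (rev L) = seq_len L.
Proof.
case: L => // s p; rewrite {1}lastI rev_rcons /= walk_len_rev.
by rewrite /walk_len; apply: eq_bigr => xy _; rewrite d_sym.
Qed.

Lemma dist_le_seq_len a L : d a (last a L) <= seq_len (a :: L).
Proof.
elim: L a => [|b L IH] a; first by rewrite /= d_xx walk_len_nil.
by rewrite seq_len_cons2 (le_trans (d_triangle a b _)) // lerD2l IH.
Qed.

Lemma geodesicW s t L : ohead L = Some s -> last s L = t -> sorted g L ->
  seq_len L <= d s t -> geodesic s t L.
Proof.
case: L => // a p [->] lp gp le; split => //; apply/le_anti; rewrite le /= -lp.
exact: (dist_le_seq_len s p).
Qed.

Lemma geodesic_replace_tail s t L1 x M M' : geodesic s t (L1 ++ x :: M) ->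
  path g x M' -> last x M' = last x M -> seq_len (x :: M') <= seq_len (x :: M) ->
  geodesic s t (L1 ++ x :: M').
Proof.
case=> hL lL sL tL gM' lM' le; apply: geodesicW.
- by rewrite -hL; apply: ohead_cat_cons.
- by rewrite -lL !last_cat /= lM'.
- by move: sL; rewrite !sorted_cat_cons => /andP[-> _].
- by rewrite -tL !seq_len_cat lerD2l.
Qed.

(* A repeated vertex would close a loop of positive length. *)
Lemma geodesic_uniq s t L : geodesic s t L -> uniq L.
Proof.
case: L => // a p [[<-] lp gp tight]; rewrite -lp {lp} in tight.
elim: p a gp tight => [//|b p IH] a /andP[gab gp].
rewrite seq_len_cons2 => tight.
have tight_b : seq_len (b :: p) = d b (last b p).
  apply/le_anti; rewrite dist_le_seq_len andbT -(lerD2l (d a b)) tight.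
  exact: d_triangle.
rewrite cons_uniq IH // andbT; apply/negP => a_bp.
have [p1 [p2 bp]] : exists p1 p2, b :: p = p1 ++ a :: p2.
  by case/splitPr: a_bp => p1 p2; exists p1, p2.
have lastE : last b p = last a p2 by rewrite -[last b p]/(last a (b :: p)) bp last_cat.
have le_p2 : seq_len (a :: p2) <= seq_len (b :: p).
  by rewrite bp seq_len_cat lerDr seq_len_ge0.
have ab : a != b by apply: contraTneq gab => ->; rewrite g_irr.
have := dist_le_seq_len a p2; have := d_gt0 ab.
rewrite [last a _]/= lastE in tight; lra.
Qed.

Lemma geodesic_rev s t L : geodesic s t L -> geodesic t s (rev L).
Proof.
case: L => [[]//|a p [[<-] <- gp tight]]; split.
- by rewrite {1}lastI rev_rcons.
- by rewrite rev_cons last_rcons.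
- by rewrite rev_sorted; apply: sub_sorted gp => x y; rewrite g_sym.
- by rewrite seq_len_rev tight d_sym.
Qed.

Lemma rank_mass_cons a L : rank_mass (a :: L) = (2 ^ rk a + rank_mass L)%N.
Proof. exact: big_cons. Qed.

Lemma rank_mass_cat L1 L2 : rank_mass (L1 ++ L2) = (rank_mass L1 + rank_mass L2)%N.
Proof. exact: big_cat. Qed.

Lemma rank_mass_rev L : rank_mass (rev L) = rank_mass L.
Proof. exact: big_rev. Qed.

Let pow2_gt0 a : (0 < 2 ^ rk a)%N.
Proof. by rewrite expn_gt0. Qed.

Let pow2_double_le a b : (rk a < rk b)%N -> (2 * 2 ^ rk a <= 2 ^ rk b)%N.
Proof. by move=> ab; rewrite -expnS leq_pexp2l. Qed.

Lemma rank_mass_le_card L : uniq L -> (rank_mass L <= \sum_(v : T) 2 ^ rk v)%N.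
Proof.
move=> uL; rewrite /rank_mass big_uniq // [X in (X <= _)%N]big_mkcond /=.
by rewrite leq_sum // => v _; case: ifP.
Qed.

Lemma g_rk_neq : subrel g (fun x y => rk x != rk y).
Proof. by move=> x y; apply: contraTneq => /rk_inj ->; rewrite g_irr. Qed.

(* At a local minimum b of a -- b -- c, the upper clique of b lets us jump from a to c. *)
Lemma shortcut_valley s t L : geodesic s t L -> ~~ unimodal rk L ->
  exists2 L', geodesic s t L' & (rank_mass L' < rank_mass L)%N.
Proof.
move=> gL /(not_unimodal_valley (sub_sorted g_rk_neq _)).
case=> [|L1 [a [b [c [L2 [EL ba bc]]]]]]; first by case: gL.
have ac : a != c.
  apply: contraTneq (geodesic_uniq gL); rewrite EL => ->.
  by rewrite cat_uniq /= !inE eqxx !orbT !andbF.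
have [gba gbc gc] : [/\ g b a, g b c & path g c L2].
  by case: (gL) => _ _ + _; rewrite EL sorted_cat_cons /= g_sym => /and4P[].
exists (L1 ++ a :: c :: L2).
  rewrite EL in gL; apply: geodesic_replace_tail gL _ _ _.
  - by rewrite /= gc (g_upper_clique gba gbc).
  - by [].
  - by rewrite !seq_len_cons2 addrA lerD2r.
by rewrite EL !(rank_mass_cat, rank_mass_cons); have := pow2_gt0 b; lia.
Qed.

Lemma reroute_above z y B : path g y B -> unimodal rk (y :: B) -> g z y ->
  (rk y < rk z)%N -> z \notin B ->
  exists B', [/\ path g z B', last z B' = last y B, unimodal rk (z :: B'),
    seq_len (z :: B') <= d z y + seq_len (y :: B) &
    (rank_mass (y :: B) + 2 ^ rk y <= rank_mass (z :: B'))%N].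
Proof.
have descend y' B' : path g y' B' -> path (rk_gt rk) y' B' -> g z y' -> (rk y' < rk z)%N ->
  exists B'', [/\ path g z B'', last z B'' = last y' B', unimodal rk (z :: B''),
    seq_len (z :: B'') <= d z y' + seq_len (y' :: B') &
    (rank_mass (y' :: B') + 2 ^ rk y' <= rank_mass (z :: B''))%N].
  move=> gB' down gzy' y'z; exists (y' :: B'); split => //.
  - by rewrite /= gzy'.
  - by rewrite /= ltnNge (ltnW y'z) /= {1}/rk_gt y'z.
  - by rewrite seq_len_cons2.
  - by rewrite !rank_mass_cons; have := pow2_double_le y'z; lia.
elim: B y => [|u B IH] y gyB uyB gzy yz zB; first exact: descend.
have [yu | uy] := ltnP (rk y) (rk u); last first.
  by apply: descend => //; move: uyB => /=; rewrite ltnNge uy.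
case/andP: gyB => gyu guB; have uuB : unimodal rk (u :: B) by move: uyB => /=; rewrite yu.
have zu : z != u by apply: contraNneq zB => ->; rewrite mem_head.
have gzu : g z u by apply: (g_upper_clique _ gyu yz yu zu); rewrite g_sym.
have le_zu : d z u <= d z y + d y u := d_triangle z y u.
have [uz | zu'] := ltnP (rk u) (rk z).
  have zB' : z \notin B by apply: contra zB => z_B; rewrite inE z_B orbT.
  have [B' [gB' lB' uB' lenB' massB']] := IH u guB uuB gzu uz zB'.
  exists B'; split => //.
    by apply: le_trans lenB' _; rewrite seq_len_cons2 addrA lerD2r.
  by move: massB'; rewrite !rank_mass_cons; have := pow2_double_le yu; lia.
have zu_lt : (rk z < rk u)%N.
  by rewrite ltn_neqAle zu' andbT; apply: contra zu => /eqP/rk_inj ->.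
exists (u :: B); split => //.
- by rewrite /= gzu.
- by rewrite /= zu_lt.
- by rewrite !seq_len_cons2 addrA lerD2r.
- by rewrite !rank_mass_cons; have := pow2_double_le yz; lia.
Qed.

Lemma bypass_ascent s t L1 x y L2 : geodesic s t (L1 ++ x :: y :: L2) ->
  unimodal rk (L1 ++ x :: y :: L2) -> (rk x < rk y)%N -> bypassable x y ->
  exists L', [/\ geodesic s t L', unimodal rk L' &
    (rank_mass (L1 ++ x :: y :: L2) < rank_mass L')%N].
Proof.
move=> gL + xy [z [zy xz gxz gzy dxy]]; rewrite unimodal_cat_ascent // => /andP[uL1 uyL2].
have gyL2 : path g y L2.
  by case: gL => _ _ + _; rewrite sorted_cat_cons /= => /and3P[].
have gL' : geodesic s t (L1 ++ x :: z :: y :: L2).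
  apply: geodesic_replace_tail gL _ _ _ => //; first by rewrite /= gxz gzy.
  by rewrite !seq_len_cons2 dxy addrA.
have zL2 : z \notin L2.
  move: (geodesic_uniq gL'); rewrite cat_uniq => /and3P[_ _ /= /and3P[_]].
  by rewrite inE negb_or => /andP[].
have [zy' | yz] := ltnP (rk z) (rk y).
  exists (L1 ++ x :: z :: y :: L2); split => //.
    by rewrite unimodal_cat_ascent // uL1 /= zy'.
  by rewrite !(rank_mass_cat, rank_mass_cons); have := pow2_gt0 z; lia.
have {}yz : (rk y < rk z)%N.
  by rewrite ltn_neqAle yz andbT; apply: contraNneq zy => /rk_inj ->.
have [B' [gB' lB' uB' lenB' massB']] := reroute_above gyL2 uyL2 gzy yz zL2.
exists (L1 ++ x :: z :: B'); split.
- apply: geodesic_replace_tail gL _ _ _ => /=; [by rewrite gxz | by [] |].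
  by rewrite !walk_len_cons -!/(seq_len (_ :: _)) dxy -addrA lerD2l (le_trans lenB').
- by rewrite unimodal_cat_ascent // uL1.
- by move: massB'; rewrite !(rank_mass_cat, rank_mass_cons); have := pow2_gt0 y; lia.
Qed.

Lemma remove_redundant_edge s t L x y : geodesic s t L -> unimodal rk L ->
  (x, y) \in zip L (behead L) -> redundant x y ->
  exists L', [/\ geodesic s t L', unimodal rk L' & (rank_mass L < rank_mass L')%N].
Proof.
move=> gL uL /split_consecutive[L1 [L2 EL]]; rewrite EL in gL uL *.
case=> -[xy bxy]; first exact: bypass_ascent.
have ELr : rev (L1 ++ x :: y :: L2) = rev L2 ++ y :: x :: rev L1.
  by rewrite rev_cat !rev_cons -!cats1 -!catA.
have gLr := geodesic_rev gL; have uLr := unimodal_rev uL; rewrite ELr in gLr uLr.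
have [L' [gL' uL' massL']] := bypass_ascent gLr uLr xy bxy.
exists (rev L'); split.
- exact: geodesic_rev.
- exact: unimodal_rev.
- by rewrite rank_mass_rev -(rank_mass_rev (L1 ++ _)) ELr.
Qed.

Lemma exists_unimodal_geodesic s t L : geodesic s t L ->
  exists2 L', geodesic s t L' & unimodal rk L'.
Proof.
apply: (nat_descent (m := rank_mass)) => L0 gL0 nuL0.
by apply: shortcut_valley gL0 _; apply/negP.
Qed.

(* Bypassing raises the rank mass, which is bounded since geodesics are simple. *)
Lemma exists_unimodal_geodesic_avoiding s t L : geodesic s t L ->
  exists L', [/\ geodesic s t L', unimodal rk L' &
    forall xy, xy \in zip L' (behead L') -> ~ redundant xy.1 xy.2].
Proof.
case/exists_unimodal_geodesic => L0 gL0 uL0.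
pose deficit L := (\sum_(v : T) 2 ^ rk v - rank_mass L)%N.
have step M : geodesic s t M /\ unimodal rk M ->
    ~ (forall xy, xy \in zip M (behead M) -> ~ redundant xy.1 xy.2) ->
    exists2 M', geodesic s t M' /\ unimodal rk M' & (deficit M' < deficit M)%N.
  case=> gM uM /not_all_ex_not[[x y] nQ]; have [xyL /NNPP rxy] := imply_to_and _ _ nQ.
  have [L' [gL' uL' massL']] := remove_redundant_edge gM uM xyL rxy.
  by exists L' => //; rewrite /deficit; have := rank_mass_le_card (geodesic_uniq gL'); lia.
by have [L' [gL' uL'] noR] := nat_descent step (conj gL0 uL0); exists L'.
Qed.

Lemma unimodal_geodesic_redundant x y L : g x y -> geodesic x y L -> unimodal rk L ->
  L != [:: x; y] -> redundant x y.
Proof.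
wlog xy : x y L / (rk x < rk y)%N.
  move=> main gxy gL uL nL; case: (ltngtP (rk x) (rk y)) => [xy|yx|/rk_inj exy].
  - exact: main xy gxy gL uL nL.
  - suff: redundant y x by case; [right|left].
    apply: main (geodesic_rev gL) (unimodal_rev uL) _ => //; first by rewrite g_sym.
    by apply: contraNneq nL => /(congr1 rev); rewrite revK => ->.
  - by move: gxy; rewrite exy g_irr.
move=> gxy gL uL nL; left; split => //.
have uniqL := geodesic_uniq gL.
case: L gL uL nL uniqL => [[]//|a [|v [|u q]]] [[->] /= lL gL tight] //;
  [by move: gxy; rewrite -lL g_irr | by rewrite lL eqxx |].
case/andP: gL => gxv gL uL _ uniqL.
have y_uq : y \in u :: q by rewrite -lL mem_last.
have vy : v != y.
  by apply: contraTneq uniqL => ->; rewrite /= y_uq andbF.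
have xv : (rk x < rk v)%N.
  case: ltnP uL => //= vx down.
  have := @path_rk_gt_last _ rk x [:: v, u & q] down; rewrite /= lL => yx.
  by move: xy; rewrite ltnNge yx.
exists v; split => //.
  by apply: g_upper_clique xv xy vy.
have le_vy : d v y <= walk_len d v (u :: q).
  by rewrite -lL; exact: (dist_le_seq_len v (u :: q)).
rewrite walk_len_cons in tight.
by apply/le_anti; rewrite d_triangle -tight lerD2l le_vy.
Qed.

End Geodesics.

Section PerfectMetric.
Variables (R : realFieldType) (T : finType) (e : rel T) (w : T -> T -> R)
  (rank : T -> 'I_#|T|).
Hypothesis e_sym : symmetric e.
Hypothesis e_irr : irreflexive e.
Hypothesis e_conn : forall s t : T, connect e s t.
Hypothesis w_sym : forall x y, e x y -> w x y = w y x.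
Hypothesis w_pos : forall x y, e x y -> 0 < w x y.
Hypothesis rank_inj : injective rank.

Local Notation d := (perfect_metric e w).
Local Notation g := (gstar e rank).
Let rk (v : T) : nat := rank v.

Let rk_inj : injective rk.
Proof. by move=> x y /val_inj/rank_inj. Qed.

Let d_sym x y : d x y = d y x.
Proof. exact: dist_I_sym. Qed.

Let d_xx x : d x x = 0.
Proof. exact: dist_I_xx. Qed.

Let d_gt0 x y : x != y -> 0 < d x y.
Proof. exact: dist_I_gt0. Qed.

Let d_triangle x y z : d x z <= d x y + d y z.
Proof. exact: dist_I_triangle. Qed.

Let g_sym : symmetric g.
Proof. exact: gstar_sym. Qed.

Let g_irr : irreflexive g.
Proof. exact: gstar_irr. Qed.

Let g_upper_clique x a b : g x a -> g x b ->
  (rk x < rk a)%N -> (rk x < rk b)%N -> a != b -> g a b.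
Proof. exact: gstar_upper_clique. Qed.

Lemma up_down_unimodal s p : up_down rank s p <-> unimodal rk (s :: p).
Proof.
rewrite -unimodalP /up_down; split=> -[j [up down]]; exists j;
  by move: up down; rewrite -map_take -map_drop !sorted_map.
Qed.

Lemma exists_perfect_geodesic s t : exists L, geodesic d g s t L.
Proof.
have [q [pq lq wq]] := dist_I_attained e_conn w_pos s t.
exists (s :: q); apply: geodesicW => //.
- by rewrite /=; apply: sub_path pq; apply: sub_gstar.
- rewrite [perfect_metric _ _ s t]/perfect_metric -wq.
  by apply: (ler_walk_len pq) => a b /dist_I_le_weight; apply.
Qed.

Lemma exists_updown_walk_avoiding_R s t : exists p,
  [/\ is_walk g s t p, up_down rank s p, avoids_R e w rank s p &
      walk_len d s p = dist_I e w s t].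
Proof.
have [L0 gL0] := exists_perfect_geodesic s t.
have [L [gL up noR]] := exists_unimodal_geodesic_avoiding d_sym d_xx d_gt0 d_triangle
  g_sym g_irr rk_inj g_upper_clique gL0.
case: L gL up noR => [[]//|a p [[->] lp gp tight]] up noR.
exists p; split => //.
- by rewrite /is_walk -lp eqxx andbT.
- exact/up_down_unimodal.
- by move=> xy /noR nR [].
Qed.

Lemma updown_shortest_walk_unique x y : g x y -> ~ in_R e w rank x y ->
  forall p, is_walk g x y p -> up_down rank x p ->
  walk_len d x p = dist_I e w x y -> p = [:: y].
Proof.
move=> gxy nR p /andP[gp /eqP lp] /up_down_unimodal up tight.
have [//|ne] := eqVneq p [:: y]; case: nR; split => //.
apply: (unimodal_geodesic_redundant d_sym d_xx d_gt0 d_triangle g_sym g_irr rk_inj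
  g_upper_clique gxy _ up); first by split.
by apply: contra_neq ne => -[].
Qed.

End PerfectMetric.

Unset Implicit Arguments.

Theorem mainTheorem9 (R : realFieldType) (T : finType) (e : rel T) (w : T -> T -> R)
  (rank : T -> 'I_#|T|)
  (e_sym : symmetric e) (e_irr : irreflexive e)
  (e_conn : forall s t : T, connect e s t)
  (w_sym : forall x y, e x y -> w x y = w y x)
  (w_pos : forall x y, e x y -> 0 < w x y)
  (rank_inj : injective rank) :
  (forall s t : T, exists p : seq T,
     [/\ is_walk (gstar e rank) s t p, up_down rank s p, avoids_R e w rank s p &
         walk_len (perfect_metric e w) s p = dist_I e w s t]) /\
  (forall x y : T, gstar e rank x y -> ~ in_R e w rank x y ->
     forall p : seq T, is_walk (gstar e rank) x y p -> up_down rank x p ->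
       walk_len (perfect_metric e w) x p = dist_I e w x y -> p = [:: y]).
Proof.
split; first exact: exists_updown_walk_avoiding_R e_sym e_irr e_conn w_sym w_pos rank_inj.
exact: updown_shortest_walk_unique e_sym e_irr e_conn w_sym w_pos rank_inj.
Qed.
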